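(* Let $\mathcal{X}\subset\mathbb{R}^n$ be convex and compact with $\mathbf{0}\in\mathcal{X}$ and diameter at most $D$ (i.e. $\|\mathbf{x}-\mathbf{y}\|_2\le D$ for all $\mathbf{x},\mathbf{y}\in\mathcal{X}$). Let $f_0,f_1,\dots,f_T:\mathcal{X}\to\mathbb{R}$ be convex differentiable functions and let $\eta\in(0,1]$. Let $\mathbf{x}_0\in\mathcal{X}$ and for $t\ge 0$ define $\mathbf{x}_t'\in\arg\min_{\mathbf{x}\in\mathcal{X}}\langle\nabla f_t(\mathbf{x}_t),\mathbf{x}\rangle$ and $\mathbf{x}_{t+1}=(1-\eta)\mathbf{x}_t+\eta\mathbf{x}_t'$. Then for any $\mathbf{v}_0,\mathbf{v}_1,\dots,\mathbf{v}_T\in\mathcal{X}$ and every $t\in\{1,\dots,T\}$, $$f_t(\mathbf{x}_t)-f_t(\mathbf{v}_t)\le f^{\sup}_{t,t-1}+(1-\eta)\big(f_{t-1}(\mathbf{x}_{t-1})-f_{t-1}(\mathbf{v}_{t-1})\big)+f_{t-1}(\mathbf{v}_{t-1})-f_t(\mathbf{v}_t)+\eta D\|\nabla f_t(\mathbf{x}_t)-\nabla f_{t-1}(\mathbf{x}_{t-1})\|_2,$$ where $f^{\sup}_{t,t-1}=\sup_{\mathbf{x}\in\mathcal{X}}|f_t(\mathbf{x})-f_{t-1}(\mathbf{x})|$.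
   Context: The iteration is the Online Frank-Wolfe (OFW) update with constant step size $\eta$. *)

From HB Require Import structures.
From mathcomp Require Import all_boot all_order all_algebra.
From mathcomp Require Import all_classical all_reals all_analysis.
Set Implicit Arguments. Unset Strict Implicit. Unset Printing Implicit Defensive.
Import Order.TTheory GRing.Theory Num.Theory.
Import numFieldNormedType.Exports.
Local Open Scope classical_set_scope.
Local Open Scope ring_scope.

Section Defs.
Variables (R : realType) (n : nat).

Definition dotp (u v : 'rV[R]_n) : R := \sum_(i < n) u ord0 i * v ord0 i.
Definition norm2 (u : 'rV[R]_n) : R := Num.sqrt (dotp u u).

Definition grad (f : 'rV[R]_n -> R) (x : 'rV[R]_n) : 'rV[R]_n :=
  \row_(i < n) ('d f x : 'rV[R]_n -> R) (delta_mx ord0 i).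

Definition convex_setE (X : set 'rV[R]_n) : Prop :=
  forall x y (l : R), X x -> X y -> 0 <= l <= 1 -> X ((1 - l) *: x + l *: y).

Definition convex_on (X : set 'rV[R]_n) (f : 'rV[R]_n -> R) : Prop :=
  forall x y (l : R), X x -> X y -> 0 <= l <= 1 ->
    f ((1 - l) *: x + l *: y) <= (1 - l) * f x + l * f y.

Definition fsup (X : set 'rV[R]_n) (g h : 'rV[R]_n -> R) : R :=
  sup [set `|g x - h x| | x in X].

End Defs.

From HB Require Import structures.
From mathcomp Require Import all_boot all_order all_algebra.
From mathcomp Require Import all_classical all_reals all_analysis.
From mathcomp Require Import ring lra.
Set Implicit Arguments. Unset Strict Implicit. Unset Printing Implicit Defensive.
Import Order.TTheory GRing.Theory Num.Theory.
Import numFieldNormedType.Exports.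
Local Open Scope classical_set_scope.
Local Open Scope ring_scope.

(* Write [g_t] for [grad f_t (x_t)] and [s = t - 1].  Convexity of [f_t] at
   [x_t], with [x_s - x_t = eta (x_s - x'_s)], gives
   [f_t(x_t) <= f_t(x_s) + eta <g_t, x'_s - x_s>].  Replacing [f_t(x_s)] by
   [f_s(x_s)] costs at most [fsup].  Split [g_t = g_s + (g_t - g_s)]: since
   [x'_s] minimises [<g_s, .>] over [X], convexity of [f_s] bounds the first
   part by [f_s(v_s) - f_s(x_s)], and Cauchy-Schwarz with the diameter bound
   bounds the second by [D |g_t - g_s|]. *)

Section EuclideanGeometry.
Variables (R : realType) (n : nat).
Implicit Types (u v w : 'rV[R]_n).

Lemma dotpC u v : dotp u v = dotp v u.
Proof. by apply: eq_bigr => i _; rewrite mulrC. Qed.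

Lemma dotpBl u v w : dotp (u - v) w = dotp u w - dotp v w.
Proof. by rewrite /dotp -sumrB; apply: eq_bigr => i _; rewrite !mxE mulrBl. Qed.

Lemma dotpBr u v w : dotp u (v - w) = dotp u v - dotp u w.
Proof. by rewrite dotpC dotpBl !(dotpC u). Qed.

Lemma dotpZr u v (a : R) : dotp u (a *: v) = a * dotp u v.
Proof.
by rewrite /dotp mulr_sumr; apply: eq_bigr => i _; rewrite !mxE mulrCA.
Qed.

Lemma dotpp_ge0 u : 0 <= dotp u u.
Proof. by apply: sumr_ge0 => i _; rewrite -expr2 sqr_ge0. Qed.

Lemma dotpp_eq0 u v : dotp u u = 0 -> dotp u v = 0.
Proof.
move=> /psumr_eq0P u0; rewrite /dotp big1 // => i _.
have /eqP : u ord0 i * u ord0 i = 0 by apply: u0 => // j _; rewrite -expr2 sqr_ge0.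
by rewrite mulf_eq0 orbb => /eqP ->; rewrite mul0r.
Qed.

Lemma norm2_ge0 u : 0 <= norm2 u.
Proof. exact: sqrtr_ge0. Qed.

(* Expand [0 <= |B u - A v|^2 = 2 A B (A B - <u, v>)]; the degenerate cases
   [A = 0] and [B = 0] force [<u, v> = 0]. *)
Lemma cauchy_schwarz u v : dotp u v <= norm2 u * norm2 v.
Proof.
set A := norm2 u; set B := norm2 v.
have AA : A ^+ 2 = dotp u u by rewrite sqr_sqrtr // dotpp_ge0.
have BB : B ^+ 2 = dotp v v by rewrite sqr_sqrtr // dotpp_ge0.
have [A0|A0] := eqVneq A 0.
  by rewrite dotpp_eq0 ?A0 ?mul0r // -AA A0 expr0n.
have [B0|B0] := eqVneq B 0.
  by rewrite dotpC dotpp_eq0 ?B0 ?mulr0 // -BB B0 expr0n.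
have AB_gt0 : 0 < A * B by rewrite mulr_gt0 // lt0r ?A0 ?B0 ?norm2_ge0.
have : 0 <= \sum_(i < n) (u ord0 i * B - v ord0 i * A) ^+ 2.
  by apply: sumr_ge0 => i _; exact: sqr_ge0.
have -> : \sum_(i < n) (u ord0 i * B - v ord0 i * A) ^+ 2 =
    B ^+ 2 * dotp u u - 2 * A * B * dotp u v + A ^+ 2 * dotp v v.
  rewrite /dotp !mulr_sumr -sumrB -big_split /=; apply: eq_bigr => i _; ring.
rewrite -AA -BB => sq_ge0; rewrite -(ler_pM2l AB_gt0); nra.
Qed.

End EuclideanGeometry.

Section FirstOrderConvexity.
Variables (R : realType) (n : nat) (X : set 'rV[R]_n) (f : 'rV[R]_n -> R).
Hypothesis f_cvx : convex_on X f.

Lemma diff_grad y w : 'd f y w = dotp (grad f y) w.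
Proof.
rewrite {1}(row_sum_delta w) linear_sum /dotp; apply: eq_bigr => i _.
by rewrite linearZ /= mxE mulrC.
Qed.

Lemma convex_on_slope_le y z (h : R) : X y -> X z -> 0 < h <= 1 ->
  h^-1 * (f (h *: (z - y) + y) - f y) <= f z - f y.
Proof.
move=> Xy Xz /andP[h0 h1]; rewrite ler_pdivrMl // lerBlDr.
have -> : h *: (z - y) + y = (1 - h) *: y + h *: z.
  by rewrite scalerBr scalerBl scale1r addrC addrCA addrC.
apply: le_trans (f_cvx Xy Xz _) _; first by rewrite ltW // h1.
lra.
Qed.

Lemma convex_on_diff_le y z : X y -> X z -> differentiable f y ->
  'd f y (z - y) <= f z - f y.
Proof.
move=> Xy Xz df; rewrite -deriveE //.
have slope_cvg : (fun h : R => h^-1 *: (f (h *: (z - y) + y) - f y)) @ 0^'+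
    --> 'D_(z - y) f y.
  have right_le_punctured : (0 : R)^'+ `=>` (0 : R)^'.
    move=> A; rewrite /at_right /dnbhs /within /=.
    by apply: filterS => h Ah h0; apply: Ah; rewrite gt_eqF.
  exact: cvg_trans (cvg_fmap2 right_le_punctured) (diff_derivable df).
apply: (cvgr_to_le slope_cvg); near=> h.
apply: convex_on_slope_le => //; apply/andP; split.
- by near: h; exact: nbhs_right_gt.
- by near: h; exact: nbhs_right_le.
Unshelve. all: by end_near.
Qed.

Lemma convex_on_grad_le y z : X y -> X z -> differentiable f y ->
  f y + dotp (grad f y) (z - y) <= f z.
Proof. by move=> Xy Xz df; rewrite -diff_grad addrC -lerBrDr convex_on_diff_le. Qed.

End FirstOrderConvexity.

Lemma le_fsup (R : realType) (n : nat) (X : set 'rV[R]_n) (g h : 'rV[R]_n -> R) y :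
  compact X -> (forall z, X z -> {for z, continuous g}) ->
  (forall z, X z -> {for z, continuous h}) -> X y ->
  `|g y - h y| <= fsup X g h.
Proof.
move=> X_cpt g_cont h_cont Xy.
have [c Xc c_max] : exists2 c, c \in X &
    forall z, z \in X -> `|g z - h z| <= `|g c - h c|.
  apply: EVT_max_rV => //; first by exists y.
  apply: continuous_in_subspaceT => z /set_mem Xz.
  apply: (continuous_comp (f := fun t => g t - h t)); last exact: norm_continuous.
  exact: cvgB (g_cont z Xz) (h_cont z Xz).
apply: ub_le_sup; last by exists y.
by exists `|g c - h c| => _ [z Xz <-]; apply: c_max; exact/mem_set.
Qed.

Section FrankWolfeStep.
Variables (R : realType) (n : nat) (X : set 'rV[R]_n).

Lemma convex_iterate_mem (x x' : nat -> 'rV[R]_n) (eta : R) (T : nat) :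
  convex_setE X -> 0 <= eta <= 1 -> X (x 0%N) ->
  (forall t, (t < T)%N -> X (x' t)) ->
  (forall t, x t.+1 = (1 - eta) *: x t + eta *: x' t) ->
  forall t, (t <= T)%N -> X (x t).
Proof.
move=> X_cvx eta01 Xx0 Xx' x_rec; elim=> [//|t IHt] tT.
by rewrite x_rec; apply: X_cvx => //; [exact: IHt (ltnW tT) | exact: Xx'].
Qed.

Lemma frank_wolfe_descent (f : 'rV[R]_n -> R) (y y' z : 'rV[R]_n) (eta : R) :
  convex_on X f -> X y -> X z -> differentiable f z ->
  z = (1 - eta) *: y + eta *: y' ->
  f z <= f y + eta * dotp (grad f z) (y' - y).
Proof.
move=> f_cvx Xy Xz df z_def.
have := convex_on_grad_le f_cvx Xz Xy df.
have -> : y - z = eta *: (y - y').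
  by rewrite z_def scalerBl scale1r scalerBr opprD opprB addrA [y + _]addrC subrK.
by rewrite dotpZr !dotpBr; lra.
Qed.

Lemma frank_wolfe_gap_le (g : 'rV[R]_n -> R) (D : R) (y y' w c : 'rV[R]_n) :
  convex_on X g -> X y -> X y' -> X w -> differentiable g y ->
  (forall u, X u -> dotp (grad g y) y' <= dotp (grad g y) u) ->
  (forall u u', X u -> X u' -> norm2 (u - u') <= D) ->
  dotp c (y' - y) <= g w - g y + D * norm2 (c - grad g y).
Proof.
move=> g_cvx Xy Xy' Xw dg y'_min diam.
have lin_gap : dotp (grad g y) (y' - y) <= g w - g y.
  rewrite lerBrDl; apply: le_trans (convex_on_grad_le g_cvx Xy Xw dg).
  by rewrite lerD2l !dotpBr lerD2r y'_min.
have grad_gap : dotp (c - grad g y) (y' - y) <= norm2 (c - grad g y) * D.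
  apply: le_trans (cauchy_schwarz _ _) _.
  by rewrite ler_wpM2l ?norm2_ge0 ?diam.
move: grad_gap; rewrite dotpBl; lra.
Qed.

End FrankWolfeStep.

Theorem lemma1 (R : realType) (n : nat) (X : set 'rV[R]_n) (D : R)
  (T : nat) (f : nat -> 'rV[R]_n -> R) (eta : R)
  (x x' v : nat -> 'rV[R]_n) :
  convex_setE X -> compact X -> X 0 ->
  (forall y z, X y -> X z -> norm2 (y - z) <= D) ->
  (forall t, (t <= T)%N -> convex_on X (f t)) ->
  (forall t, (t <= T)%N -> forall y, X y -> differentiable (f t) y) ->
  0 < eta <= 1 ->
  X (x 0%N) ->
  (forall t, (t <= T)%N -> X (x' t) /\
     forall y, X y -> dotp (grad (f t) (x t)) (x' t) <= dotp (grad (f t) (x t)) y) ->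
  (forall t, x t.+1 = (1 - eta) *: x t + eta *: x' t) ->
  (forall t, (t <= T)%N -> X (v t)) ->
  forall t, (1 <= t <= T)%N ->
    f t (x t) - f t (v t) <=
      fsup X (f t) (f t.-1)
      + (1 - eta) * (f t.-1 (x t.-1) - f t.-1 (v t.-1))
      + (f t.-1 (v t.-1) - f t (v t))
      + eta * D * norm2 (grad (f t) (x t) - grad (f t.-1) (x t.-1)).
Proof.
move=> X_cvx X_cpt _ diam f_cvx f_diff /andP[eta_gt0 eta_le1] Xx0 lmo x_rec Xv.
case=> [//|s] /andP[_ sT] /=; have sT' := ltnW sT.
have Xx : forall t, (t <= T)%N -> X (x t).
  apply: (convex_iterate_mem X_cvx _ Xx0 _ x_rec); first by rewrite ltW.
  by move=> t tT; exact: (lmo t (ltnW tT)).1.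
have [Xx's x's_min] := lmo s sT'.
have f_cont t : (t <= T)%N -> forall z, X z -> {for z, continuous (f t)}.
  by move=> tT z Xz; exact/differentiable_continuous/f_diff.
have descent : f s.+1 (x s.+1) <=
    f s.+1 (x s) + eta * dotp (grad (f s.+1) (x s.+1)) (x' s - x s).
  exact: frank_wolfe_descent (f_cvx _ sT) (Xx _ sT') (Xx _ sT) (f_diff _ sT _ (Xx _ sT)) (x_rec s).
have drift : f s.+1 (x s) - f s (x s) <= fsup X (f s.+1) (f s).
  exact: le_trans (ler_norm _) (le_fsup X_cpt (f_cont _ sT) (f_cont _ sT') (Xx _ sT')).
have gap := frank_wolfe_gap_le (grad (f s.+1) (x s.+1)) (f_cvx _ sT') (Xx _ sT') Xx's
  (Xv _ sT') (f_diff _ sT' _ (Xx _ sT')) x's_min diam.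
have := ler_wpM2l (ltW eta_gt0) gap; lra.
Qed.
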